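(* Let $R$ be a ring, let $T$ be a transfinite tree and let $\overline{T}$ be a completion of $T$. If $X$ is an indecomposable injective object of the category $(\overline{T},R\text{-Mod})$ of cocontinuous representations of $\overline{T}$, then $X\cong e_*^v(E)$ for some vertex $v\in\overline{T}$ and some indecomposable injective left $R$-module $E$.
   Context: A transfinite tree is a partially ordered set $T$ such that: (i) $T$ satisfies the descending chain condition; (ii) for every $v\in T$ the set $\{w\in T: w\le v\}$ is totally ordered; (iii) $T$ has a least element. A tree $T$ is complete if every chain (totally ordered subset) of $T$ has a least upper bound in $T$. A completion of $T$ is a complete tree $\overline{T}\supseteq T$ such that $T$ is a subtree of $\overline T$ closed downward (if $v\in T$, $u\in\overline T$, $u\le v$ then $u\in T$) and every element of $\overline{T}$ is the least upper bound of a chain in $T$. A poset $P$ is regarded as a category with exactly one morphism $u\to v$ if $u\le v$ and none otherwise; a representation of $P$ is a functor $X:P\to R\text{-Mod}$ (left $R$-modules). It is cocontinuous if whenever $u=\sup\{v_\alpha:\alpha<\gamma\}$ for a chain $(v_\alpha)_{\alpha<\gamma}$, one has $X(u)=\varinjlim_{\alpha<\gamma}X(v_\alpha)$ via the structure maps. $(\overline{T},R\text{-Mod})$ denotes the category of cocontinuous representations with natural transformations as morphisms. For a vertex $v$ and a module $M$, $e_*^v(M)$ is the representation with $e_*^v(M)(w)=\prod_{\mathrm{Hom}(w,v)}M$, i.e. $M$ if $w\le v$ and $0$ otherwise, with identity maps $M\to M$ for $w_1\le w_2\le v$ and zero maps otherwise; $e_*^v$ is right adjoint to evaluation at $v$.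 *)

From HB Require Import structures.
From mathcomp Require Import all_boot all_order all_algebra.
From mathcomp Require Import boolp functions.
Set Implicit Arguments. Unset Strict Implicit. Unset Printing Implicit Defensive.
Import GRing.Theory.
Local Open Scope ring_scope.

Definition is_lin (R : pzRingType) (U W : lmodType R) (f : U -> W) : Prop :=
  forall (a : R) (x y : U), f (a *: x + y) = a *: f x + f y.

Definition trivial_mod (R : pzRingType) (M : lmodType R) : Prop :=
  forall x : M, x = 0.

Definition injective_module (R : pzRingType) (E : lmodType R) : Prop :=
  forall (A B : lmodType R) (f : A -> B) (g : A -> E),
    is_lin f -> injective f -> is_lin g ->
    exists h : B -> E, is_lin h /\ forall x, h (f x) = g x.

Definition mod_biproduct (R : pzRingType) (M M1 M2 : lmodType R) : Prop :=
  exists (i1 : M1 -> M) (i2 : M2 -> M) (p1 : M -> M1) (p2 : M -> M2),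
    [/\ is_lin i1, is_lin i2, is_lin p1 & is_lin p2] /\
    [/\ (forall x, p1 (i1 x) = x), (forall x, p2 (i2 x) = x),
        (forall x, p1 (i2 x) = 0), (forall x, p2 (i1 x) = 0)
      & (forall m, i1 (p1 m) + i2 (p2 m) = m)].

Definition indecomposable_module (R : pzRingType) (E : lmodType R) : Prop :=
  ~ trivial_mod E /\
  forall M1 M2 : lmodType R, mod_biproduct E M1 M2 -> trivial_mod M1 \/ trivial_mod M2.

Record poset_ax (V : Type) (le : V -> V -> Prop) : Prop := {
  po_refl : forall v, le v v;
  po_antisym : forall u v, le u v -> le v u -> u = v;
  po_trans : forall u v w, le u v -> le v w -> le u w }.

Record is_tree (V : Type) (le : V -> V -> Prop) (P : V -> Prop) : Prop := {
  tree_dcc : ~ exists f : nat -> V,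
      forall n, P (f n) /\ le (f n.+1) (f n) /\ f n.+1 <> f n;
  tree_down_total : forall v u w, P v -> P u -> P w -> le u v -> le w v ->
      le u w \/ le w u;
  tree_least : exists r, P r /\ forall v, P v -> le r v }.

Definition is_chain (V : Type) (le : V -> V -> Prop) (P C : V -> Prop) : Prop :=
  (forall v, C v -> P v) /\ forall u v, C u -> C v -> le u v \/ le v u.

Definition is_lub (V : Type) (le : V -> V -> Prop) (C : V -> Prop) (u : V) : Prop :=
  (forall v, C v -> le v u) /\ forall w, (forall v, C v -> le v w) -> le u w.

Definition is_complete (V : Type) (le : V -> V -> Prop) : Prop :=
  forall C, is_chain le (fun _ => True) C -> exists u, is_lub le C u.

(* (V, le) is a completion of the tree T (a subset of V with the induced order) *)
Definition is_completion (V : Type) (le : V -> V -> Prop) (T : V -> Prop) : Prop :=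
  [/\ poset_ax le, is_tree le T, is_tree le (fun _ => True) & is_complete le] /\
  (forall u v, T v -> le u v -> T u) /\
  (forall u, exists C, is_chain le T C /\ is_lub le C u).

Record rep (R : pzRingType) (V : Type) (le : V -> V -> Prop) := Rep {
  robj : V -> lmodType R;
  rmap : forall u v, le u v -> robj u -> robj v;
  rmap_lin : forall u v (p : le u v), is_lin (rmap p);
  rmap_id : forall u (p : le u u) x, rmap p x = x;
  rmap_comp : forall u v w (p : le u v) (q : le v w) (r : le u w) x,
      rmap r x = rmap q (rmap p x) }.

Arguments rmap {R V le} r {u v} : rename.
Arguments robj {R V le} r : rename.

Definition is_nat (R : pzRingType) (V : Type) (le : V -> V -> Prop)
    (X Y : rep R le) (f : forall v, robj X v -> robj Y v) : Prop :=
  (forall v, is_lin (f v)) /\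
  forall u v (p : le u v) x, f v (rmap X p x) = rmap Y p (f u x).

Definition is_colim_cocone (R : pzRingType) (V : Type) (le : V -> V -> Prop)
    (X : rep R le) (C : V -> Prop) (u : V) : Prop :=
  forall (M : lmodType R) (g : forall v, C v -> robj X v -> M),
    (forall v (Cv : C v), is_lin (g v Cv)) ->
    (forall v w (Cv : C v) (Cw : C w) (p : le v w) x, g w Cw (rmap X p x) = g v Cv x) ->
    exists h : robj X u -> M,
      [/\ is_lin h,
          (forall v (Cv : C v) (p : le v u) x, h (rmap X p x) = g v Cv x)
        & (forall h' : robj X u -> M, is_lin h' ->
             (forall v (Cv : C v) (p : le v u) x, h' (rmap X p x) = g v Cv x) ->
             forall y, h' y = h y)].

Definition cocontinuous (R : pzRingType) (V : Type) (le : V -> V -> Prop)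
    (X : rep R le) : Prop :=
  forall (C : V -> Prop) (u : V), is_chain le (fun _ => True) C ->
    (exists v, C v) -> is_lub le C u -> is_colim_cocone X C u.

Definition rep_mono (R : pzRingType) (V : Type) (le : V -> V -> Prop)
    (A B : rep R le) (f : forall v, robj A v -> robj B v) : Prop :=
  forall (Z : rep R le) (g h : forall v, robj Z v -> robj A v),
    cocontinuous Z -> is_nat g -> is_nat h ->
    (forall v z, f v (g v z) = f v (h v z)) -> forall v z, g v z = h v z.

Definition injective_obj (R : pzRingType) (V : Type) (le : V -> V -> Prop)
    (X : rep R le) : Prop :=
  forall (A B : rep R le) (f : forall v, robj A v -> robj B v)
         (g : forall v, robj A v -> robj X v),
    cocontinuous A -> cocontinuous B -> is_nat f -> rep_mono f -> is_nat g ->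
    exists h : forall v, robj B v -> robj X v,
      is_nat h /\ forall v x, h v (f v x) = g v x.

Definition zero_rep (R : pzRingType) (V : Type) (le : V -> V -> Prop)
    (X : rep R le) : Prop := forall v, trivial_mod (robj X v).

Definition rep_biproduct (R : pzRingType) (V : Type) (le : V -> V -> Prop)
    (X Y Z : rep R le) : Prop :=
  exists (i1 : forall v, robj Y v -> robj X v) (i2 : forall v, robj Z v -> robj X v)
         (p1 : forall v, robj X v -> robj Y v) (p2 : forall v, robj X v -> robj Z v),
    [/\ is_nat i1, is_nat i2, is_nat p1 & is_nat p2] /\
    [/\ (forall v x, p1 v (i1 v x) = x), (forall v x, p2 v (i2 v x) = x),
        (forall v x, p1 v (i2 v x) = 0), (forall v x, p2 v (i1 v x) = 0)
      & (forall v m, i1 v (p1 v m) + i2 v (p2 v m) = m)].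

Definition indecomposable_obj (R : pzRingType) (V : Type) (le : V -> V -> Prop)
    (X : rep R le) : Prop :=
  ~ zero_rep X /\
  forall Y Z : rep R le, cocontinuous Y -> cocontinuous Z ->
    rep_biproduct X Y Z -> zero_rep Y \/ zero_rep Z.

Definition rep_iso (R : pzRingType) (V : Type) (le : V -> V -> Prop)
    (X Y : rep R le) : Prop :=
  exists (f : forall v, robj X v -> robj Y v) (g : forall v, robj Y v -> robj X v),
    [/\ is_nat f, is_nat g, (forall v x, g v (f v x) = x) & (forall v y, f v (g v y) = y)].

(* ---------- e_*^v(M) : w |-> prod_{Hom(w,v)} M ---------- *)

Section EStar.
Variables (R : pzRingType) (V : Type) (le : V -> V -> Prop) (Hpo : poset_ax le).
Variables (v : V) (M : lmodType R).

Definition estar_obj (w : V) : lmodType R := (le w v -> M) : lmodType R.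

Definition estar_map (w1 w2 : V) (p : le w1 w2) : estar_obj w1 -> estar_obj w2 :=
  fun x q => x (po_trans Hpo p q).

Lemma estar_map_lin w1 w2 (p : le w1 w2) : is_lin (estar_map p).
Proof. by move=> a x y; apply/funext => q. Qed.

Lemma estar_map_id w (p : le w w) x : estar_map p x = x.
Proof. by apply/funext => q; rewrite /estar_map (Prop_irrelevance (po_trans Hpo p q) q). Qed.

Lemma estar_map_comp w1 w2 w3 (p : le w1 w2) (q : le w2 w3) (r : le w1 w3) x :
  estar_map r x = estar_map q (estar_map p x).
Proof.
apply/funext => s; rewrite /estar_map.
by rewrite (Prop_irrelevance (po_trans Hpo r s) (po_trans Hpo p (po_trans Hpo q s))).
Qed.

Definition e_star : rep R le :=
  @Rep R V le estar_obj estar_map estar_map_lin estar_map_id estar_map_comp.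

End EStar.

(* Let s be a non-limit vertex with X(s) <> 0. The "cut" representation at s, which is
   e_*^s(X s) below s and X strictly above s, receives X and contains the restriction of X
   to the up-set of s; that restriction is cocontinuous precisely because s is non-limit.
   Injectivity of X splits X off the cut representation, and indecomposability makes the
   splitting an isomorphism: X vanishes at vertices incomparable with s, and X(w) -> X(s)
   is bijective for w <= s. Hence such vertices form a chain, with supremum u by
   completeness. Every map X(w) -> X(u) is injective (a colimit of bijections along the
   chain) and X vanishes off the down-set of u, since by the descending chain condition and
   cocontinuity each vertex is a colimit over non-limit ones. So the unit
   X -> e_*^u(X u) is a monomorphism; injectivity of X splits it, and it is an isomorphism.
   Injectivity and indecomposability of E := X(u) then follow from those of e_*^u(E). *)

From HB Require Import structures.
From mathcomp Require Import all_boot all_order all_algebra.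
From mathcomp Require Import boolp functions.
Set Implicit Arguments. Unset Strict Implicit. Unset Printing Implicit Defensive.
Import GRing.Theory.
Local Open Scope ring_scope.

Section LinearMaps.
Variables (R : pzRingType) (U W : lmodType R) (f : U -> W).
Hypothesis hf : is_lin f.

Lemma lin0 : f 0 = 0.
Proof.
have := hf 1 0 0; rewrite scale1r addr0 scale1r => /(congr1 (fun z => z - f 0)).
by rewrite subrr addrK.
Qed.

Lemma linD x y : f (x + y) = f x + f y.
Proof. by have := hf 1 x y; rewrite !scale1r. Qed.

Lemma linZ a x : f (a *: x) = a *: f x.
Proof. by have := hf a x 0; rewrite !addr0 lin0 addr0. Qed.

Lemma linB x y : f (x - y) = f x - f y.
Proof. by rewrite linD -scaleN1r linZ scaleN1r. Qed.

Lemma lin_inj_of_ker : (forall x, f x = 0 -> x = 0) -> injective f.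
Proof.
move=> hk x y e; apply/eqP; rewrite -subr_eq0; apply/eqP; apply: hk.
by rewrite linB e subrr.
Qed.

End LinearMaps.

Lemma is_lin_comp (R : pzRingType) (U W Z : lmodType R) (f : U -> W) (g : W -> Z) :
  is_lin f -> is_lin g -> is_lin (fun x => g (f x)).
Proof. by move=> hf hg a x y; rewrite hf hg. Qed.

Lemma is_lin_zero (R : pzRingType) (U W : lmodType R) : is_lin (fun _ : U => (0 : W)).
Proof. by move=> a x y; rewrite scaler0 addr0. Qed.

Lemma fun_absurd_eq0 (R : pzRingType) (P : Prop) (M : lmodType R) (y : P -> M) :
  ~ P -> y = 0.
Proof. by move=> nP; apply/funext => p; case: (nP p). Qed.

Lemma trivial_mod_absurd (R : pzRingType) (P : Prop) (M : lmodType R) :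
  ~ P -> trivial_mod ((P -> M) : lmodType R).
Proof. by move=> nP y; apply: fun_absurd_eq0. Qed.

Lemma proof_irr_app (P : Prop) (T : Type) (f : P -> T) a b : f a = f b.
Proof. by rewrite (Prop_irrelevance a b). Qed.

Section FixedSubmodule.
Variables (R : pzRingType) (M : lmodType R) (f : M -> M) (hf : is_lin f).

(* The dummy argument lets the submodule instance below depend on [hf]. *)
Definition fixmod (_ : is_lin f) : Type := {x : M | f x == x}.

HB.instance Definition _ := SubChoice.on (fixmod hf).

Lemma fixmod_closed : subsemimod_closed (fun x : M => f x == x).
Proof.
split; [split|].
- by rewrite /in_mem /= (lin0 hf).
- by move=> x y; rewrite /in_mem /= => /eqP hx /eqP hy; rewrite (linD hf) hx hy.
- by move=> a x; rewrite /in_mem /= => /eqP hx; rewrite (linZ hf) hx.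
Qed.

HB.instance Definition _ :=
  GRing.SubChoice_isSubLmodule.Build R M (fun x => f x == x) (fixmod hf) fixmod_closed.

End FixedSubmodule.

Lemma lub_not_le (V : Type) (le : V -> V -> Prop) (C : V -> Prop) u s :
  is_lub le C u -> ~ le u s -> exists c, C c /\ ~ le c s.
Proof.
move=> [_ lub] nus; case: (pselect (exists c, C c /\ ~ le c s)) => // H.
case: nus; apply: lub => c Cc; case: (pselect (le c s)) => // nc.
by case: H; exists c.
Qed.

Section Colimits.
Variables (R : pzRingType) (V : Type) (le : V -> V -> Prop).

Lemma colim_retract (Z X : rep R le) (C : V -> Prop) (u : V)
    (i : forall w, robj Z w -> robj X w) (r : forall w, robj X w -> robj Z w) :
  (forall w, C w \/ w = u -> is_lin (i w)) ->
  (forall w, C w \/ w = u -> is_lin (r w)) ->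
  (forall v w (p : le v w), C v \/ v = u -> C w \/ w = u ->
     forall z, i w (rmap Z p z) = rmap X p (i v z)) ->
  (forall v w (p : le v w), C v \/ v = u -> C w \/ w = u ->
     forall x, r w (rmap X p x) = rmap Z p (r v x)) ->
  (forall w, C w \/ w = u -> forall z, r w (i w z) = z) ->
  is_colim_cocone X C u -> is_colim_cocone Z C u.
Proof.
move=> il rl inat rnat ri HX M g gl gc.
have Du : C u \/ u = u by right.
have [h [hl hc hu]] := HX M (fun v Cv x => g v Cv (r v x))
  (fun v Cv => is_lin_comp (rl v (or_introl Cv)) (gl v Cv))
  (fun v w Cv Cw p x => etrans (congr1 (g w Cw) (rnat v w p (or_introl Cv) (or_introl Cw) x))
                               (gc v w Cv Cw p (r v x))).
exists (fun z => h (i u z)); split.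
- exact: is_lin_comp (il u Du) hl.
- move=> v Cv p z; have Dv : C v \/ v = u by left.
  by rewrite inat // hc ri.
- move=> h' h'l h'c y.
  have e : forall x, h' (r u x) = h x.
    apply: hu; first exact: is_lin_comp (rl u Du) h'l.
    move=> v Cv p x; have Dv : C v \/ v = u by left.
    by rewrite rnat // h'c.
  by rewrite -e ri.
Qed.

Lemma colim_trivial (Z : rep R le) (C : V -> Prop) (u : V) :
  trivial_mod (robj Z u) ->
  (forall c, C c -> exists c', C c' /\ exists p : le c c', trivial_mod (robj Z c')) ->
  is_colim_cocone Z C u.
Proof.
move=> tu fin M g gl gc; exists (fun _ => 0); split.
- exact: is_lin_zero.
- move=> v Cv p x; have [c' [Cc' [q tc']]] := fin v Cv.
  by rewrite -(gc v c' Cv Cc' q x) (tc' (rmap Z q x)) (lin0 (gl c' Cc')).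
- by move=> h' h'l _ y; rewrite (tu y) (lin0 h'l).
Qed.

(* The identity of [Z u] and the zero map both factor the zero cocone. *)
Lemma trivial_of_colim (Z : rep R le) C u :
  is_colim_cocone Z C u -> (forall c, C c -> trivial_mod (robj Z c)) ->
  trivial_mod (robj Z u).
Proof.
move=> H tc y.
have [h [_ _ hu]] := H (robj Z u) (fun v _ _ => 0) (fun v _ => @is_lin_zero _ _ _)
  (fun _ _ _ _ _ _ => erefl).
have e1 := hu id (fun a x y => erefl)
  (fun v Cv p x => etrans (congr1 _ (tc v Cv x)) (lin0 (rmap_lin p))) y.
have e0 := hu (fun _ => 0) (@is_lin_zero _ _ _) (fun _ _ _ _ => erefl) y.
by rewrite e1 -e0.
Qed.

Variable Hpo : poset_ax le.

Lemma chain_tail (C : V -> Prop) c0 :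
  is_chain le (fun _ => True) C -> is_chain le (fun _ => True) (fun c => C c /\ le c0 c).
Proof. by move=> [_ Cch]; split=> // a b [Ca _] [Cb _]; exact: Cch. Qed.

Lemma lub_tail (C : V -> Prop) c0 u :
  is_chain le (fun _ => True) C -> C c0 -> is_lub le C u ->
  is_lub le (fun c => C c /\ le c0 c) u.
Proof.
move=> [_ Cch] Cc0 [ub lub]; split=> [v [Cv _]|b hb]; first exact: ub.
apply: lub => c Cc; case: (Cch c0 c Cc0 Cc) => q; first exact: hb (conj Cc q).
exact: (po_trans Hpo q (hb c0 (conj Cc0 (po_refl Hpo c0)))).
Qed.

Lemma colim_of_tail (Z : rep R le) (C : V -> Prop) (u c0 : V) :
  is_chain le (fun _ => True) C -> (forall c, C c -> le c u) -> C c0 ->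
  is_colim_cocone Z (fun c => C c /\ le c0 c) u -> is_colim_cocone Z C u.
Proof.
move=> [_ tot] ub Cc0 HZ M g gl gc.
have [h [hl hc hu]] := HZ M (fun v Cv x => g v (proj1 Cv) x)
  (fun v Cv => gl v (proj1 Cv)) (fun v w Cv Cw p x => gc v w (proj1 Cv) (proj1 Cw) p x).
have c0c0 : C c0 /\ le c0 c0 by split=> //; apply: po_refl.
exists h; split=> // [v Cv p x|h' h'l h'c]; last exact: hu.
case: (tot c0 v Cc0 Cv) => q.
  by rewrite (hc v (conj Cv q) p x) (Prop_irrelevance (proj1 (conj Cv q)) Cv).
have q0 := ub c0 Cc0; have hc0 := hc c0 c0c0 q0.
rewrite (Prop_irrelevance (proj1 c0c0) Cc0) in hc0.
by rewrite -(gc v c0 Cv Cc0 q x) -hc0 -(rmap_comp q q0 p).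
Qed.

Lemma colim_tail (X : rep R le) (C : V -> Prop) c0 u :
  cocontinuous X -> is_chain le (fun _ => True) C -> C c0 -> is_lub le C u ->
  is_colim_cocone X (fun c => C c /\ le c0 c) u.
Proof.
move=> Xcc Cch Cc0 Cl; apply: Xcc; first exact: chain_tail.
  by exists c0; split=> //; apply: po_refl.
exact: lub_tail.
Qed.

End Colimits.

Section NaturalMaps.
Variables (R : pzRingType) (V : Type) (le : V -> V -> Prop).

Lemma is_nat_comp (A B C : rep R le)
    (f : forall w, robj A w -> robj B w) (g : forall w, robj B w -> robj C w) :
  is_nat f -> is_nat g -> is_nat (fun w x => g w (f w x)).
Proof.
move=> [fl fn] [gl gn]; split=> [w|v w p x]; first exact: is_lin_comp.
by rewrite fn gn.
Qed.

Lemma is_nat_id (X : rep R le) : is_nat (fun w (x : robj X w) => x).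
Proof. by split. Qed.

Lemma rep_mono_of_inj (A B : rep R le) (f : forall w, robj A w -> robj B w) :
  (forall w, injective (f w)) -> rep_mono f.
Proof. by move=> finj Z g h _ _ _ e w z; apply: finj; exact: e. Qed.

Lemma injective_obj_iso (X Y : rep R le) :
  injective_obj X -> rep_iso X Y -> injective_obj Y.
Proof.
move=> Xinj [f [g [fn gn gf fg]]] A B i k Acc Bcc iN iM kN.
have [h [hn he]] := Xinj A B i (fun w x => g w (k w x)) Acc Bcc iN iM (is_nat_comp kN gn).
exists (fun w x => f w (h w x)); split; first exact: is_nat_comp hn fn.
by move=> w x; rewrite he fg.
Qed.

Lemma indecomposable_obj_iso (X Y : rep R le) :
  indecomposable_obj X -> rep_iso X Y -> indecomposable_obj Y.
Proof.
move=> [Xnz Xind] [f [g [fn gn gf fg]]]; split.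
  move=> zY; apply: Xnz => w x.
  by rewrite -(gf w x) (zY w (f w x)) (lin0 (proj1 gn w)).
move=> Y1 Y2 c1 c2 [i1 [i2 [p1 [p2 [[ni1 ni2 np1 np2] [e11 e22 e12 e21 esum]]]]]].
apply: Xind => //.
exists (fun w y => g w (i1 w y)), (fun w y => g w (i2 w y)),
  (fun w x => p1 w (f w x)), (fun w x => p2 w (f w x)).
split; split; try exact: is_nat_comp.
- by move=> w y; rewrite fg e11.
- by move=> w y; rewrite fg e22.
- by move=> w y; rewrite fg e12.
- by move=> w y; rewrite fg e21.
- by move=> w m; rewrite -(linD (proj1 gn w)) esum gf.
Qed.

End NaturalMaps.

Section EStarFunctor.
Variables (R : pzRingType) (V : Type) (le : V -> V -> Prop) (Hpo : poset_ax le) (u : V).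

Lemma e_star_cocontinuous (M : lmodType R) : cocontinuous (e_star Hpo u M).
Proof.
move=> C w [_ Cch] [c0 Cc0] [ub lub].
case: (pselect (le w u)) => Hwu.
- move=> M' g gl gc.
  exists (fun y => g c0 Cc0 (fun _ => y Hwu)); split.
  + by move=> a y y'; rewrite -gl.
  + move=> c Cc p x /=; case: (Cch c0 c Cc0 Cc) => q.
    * rewrite -(gc c0 c Cc0 Cc q); congr (g _ _ _); apply/funext => q'.
      by rewrite /= /estar_map /=; exact: proof_irr_app.
    * rewrite -(gc c c0 Cc Cc0 q); congr (g _ _ _); apply/funext => q'.
      by rewrite /= /estar_map /=; exact: proof_irr_app.
  + move=> h' h'l h'c y.
    rewrite -(h'c c0 Cc0 (ub c0 Cc0)); congr (h' _); apply/funext => q.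
    by rewrite /= /estar_map /=; exact: proof_irr_app.
- apply: colim_trivial; first exact: trivial_mod_absurd.
  move=> c Cc; have [c1 [Cc1 nc1]] := lub_not_le (conj ub lub) Hwu.
  case: (Cch c c1 Cc Cc1) => q.
  + by exists c1; split=> //; exists q; exact: trivial_mod_absurd.
  + exists c; split=> //; exists (po_refl Hpo c); apply: trivial_mod_absurd => h.
    by apply: nc1; exact: (po_trans Hpo q h).
Qed.

Lemma trivial_of_e_star_zero (M : lmodType R) : zero_rep (e_star Hpo u M) -> trivial_mod M.
Proof. by move=> zM m; exact: (congr1 (fun F => F (po_refl Hpo u)) (zM u (fun _ => m))). Qed.

Definition e_star_fmap (A B : lmodType R) (f : A -> B) w (y : le w u -> A) : le w u -> B :=
  fun q => f (y q).

Lemma e_star_fmap_nat (A B : lmodType R) (f : A -> B) :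
  is_lin f -> is_nat (X := e_star Hpo u A) (Y := e_star Hpo u B) (e_star_fmap f).
Proof. by move=> hf; split=> // w a x y; apply/funext => q; rewrite /e_star_fmap /= hf. Qed.

Lemma e_star_fmap_inj (A B : lmodType R) (f : A -> B) w :
  injective f -> injective (@e_star_fmap A B f w).
Proof. by move=> finj y y' e; apply/funext => q; apply: finj; exact: (congr1 (@^~ q) e). Qed.

Lemma injective_module_of_e_star (E : lmodType R) :
  injective_obj (e_star Hpo u E) -> injective_module E.
Proof.
move=> Einj A B f g hf finj hg.
have fmono : rep_mono (A := e_star Hpo u A) (B := e_star Hpo u B) (e_star_fmap f).
  by apply: rep_mono_of_inj => w; exact: e_star_fmap_inj.
have [H [Hn He]] := Einj (e_star Hpo u A) (e_star Hpo u B) (e_star_fmap f) (e_star_fmap g)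
  (e_star_cocontinuous (M := A)) (e_star_cocontinuous (M := B)) (e_star_fmap_nat hf)
  fmono (e_star_fmap_nat hg).
exists (fun b => H u (fun _ => b) (po_refl Hpo u)); split.
  by move=> a x y; rewrite (proj1 Hn u).
by move=> x; exact: (congr1 (@^~ (po_refl Hpo u)) (He u (fun _ => x))).
Qed.

Lemma indecomposable_module_of_e_star (E : lmodType R) :
  indecomposable_obj (e_star Hpo u E) -> indecomposable_module E.
Proof.
move=> [Enz Eind]; split.
  by move=> tE; apply: Enz => w y; apply/funext => q; exact: tE.
move=> M1 M2 [i1 [i2 [p1 [p2 [[hi1 hi2 hp1 hp2] [e11 e22 e12 e21 esum]]]]]].
have bp : rep_biproduct (e_star Hpo u E) (e_star Hpo u M1) (e_star Hpo u M2).
  exists (e_star_fmap i1), (e_star_fmap i2), (e_star_fmap p1), (e_star_fmap p2).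
  split; split; try exact: e_star_fmap_nat.
  - by move=> w y; apply/funext => q; rewrite /e_star_fmap e11.
  - by move=> w y; apply/funext => q; rewrite /e_star_fmap e22.
  - by move=> w y; apply/funext => q; rewrite /e_star_fmap e12.
  - by move=> w y; apply/funext => q; rewrite /e_star_fmap e21.
  - by move=> w m; apply/funext => q; exact: esum.
have [zM|zM] := Eind _ _ (e_star_cocontinuous (M := M1)) (e_star_cocontinuous (M := M2)) bp.
  by left; exact: trivial_of_e_star_zero.
by right; exact: trivial_of_e_star_zero.
Qed.

(* The unit of the adjunction between evaluation at [u] and [e_star u]. *)
Definition e_star_unit (X : rep R le) w (x : robj X w) : le w u -> robj X u :=
  fun q => rmap X q x.

Lemma e_star_unit_nat (X : rep R le) :
  is_nat (X := X) (Y := e_star Hpo u (robj X u)) (e_star_unit (X := X)).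
Proof.
split.
  by move=> w a x y; apply/funext => q; rewrite /e_star_unit /= (rmap_lin q).
move=> v w p x; apply/funext => q; rewrite /e_star_unit /= /estar_map.
exact/esym/rmap_comp.
Qed.

Lemma rep_iso_e_star_unit (X : rep R le) :
  cocontinuous X -> injective_obj X -> (forall w, injective (e_star_unit (X := X) (w := w))) ->
  rep_iso X (e_star Hpo u (robj X u)).
Proof.
move=> Xcc Xinj einj.
have emono : rep_mono (A := X) (B := e_star Hpo u (robj X u)) (e_star_unit (X := X)).
  exact: rep_mono_of_inj.
have [rho [rn re]] := Xinj X (e_star Hpo u (robj X u)) (e_star_unit (X := X)) (fun w x => x)
  Xcc (e_star_cocontinuous (M := robj X u)) (e_star_unit_nat X) emono (is_nat_id X).
have rho_const x : rho u (fun _ => x) = x.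
  rewrite -[RHS](re u x); congr (rho u _); apply/funext => q.
  by rewrite /e_star_unit rmap_id.
exists (e_star_unit (X := X)), rho; split=> // [|w y]; first exact: e_star_unit_nat.
apply/funext => q; rewrite /e_star_unit -(proj2 rn w u q y) /= /estar_map.
rewrite -[RHS]rho_const; congr (rho u _); apply/funext => q'; exact: proof_irr_app.
Qed.

End EStarFunctor.

Section IdempotentSplitting.
Variables (R : pzRingType) (V : Type) (le : V -> V -> Prop) (X : rep R le).
Unset Implicit Arguments.
Variables (f : forall w, robj X w -> robj X w) (fl : forall w, is_lin (f w)).
Hypothesis fnat : forall v w (p : le v w) x, f w (rmap X p x) = rmap X p (f v x).
Hypothesis fidem : forall w x, f w (f w x) = f w x.
Set Implicit Arguments.

Definition fixed_obj w : lmodType R := fixmod (fl w).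

Lemma fixed_map_subproof v w (p : le v w) (k : fixed_obj v) :
  f w (rmap X p (val k)) == rmap X p (val k).
Proof. by rewrite fnat (eqP (valP k)). Qed.

Definition fixed_map v w (p : le v w) (k : fixed_obj v) : fixed_obj w :=
  exist _ (rmap X p (val k)) (fixed_map_subproof p k).

Lemma fixed_map_lin v w (p : le v w) : is_lin (fixed_map p).
Proof. by move=> a x y; apply: val_inj; exact: (rmap_lin p). Qed.

Lemma fixed_map_id v (p : le v v) x : fixed_map p x = x.
Proof. by apply: val_inj; exact: rmap_id. Qed.

Lemma fixed_map_comp w1 w2 w3 (p : le w1 w2) (q : le w2 w3) (r : le w1 w3) x :
  fixed_map r x = fixed_map q (fixed_map p x).
Proof. by apply: val_inj; exact: rmap_comp. Qed.

Definition fixed_rep : rep R le := Rep fixed_map_lin fixed_map_id fixed_map_comp.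

Lemma fixed_proj_subproof w (x : robj X w) : f w (f w x) == f w x.
Proof. by rewrite fidem. Qed.

Definition fixed_proj w (x : robj X w) : fixed_obj w := exist _ (f w x) (fixed_proj_subproof x).

Lemma fixed_rep_cocontinuous : cocontinuous X -> cocontinuous fixed_rep.
Proof.
move=> Xcc C u Cc Cne Cl.
apply: (@colim_retract _ _ _ fixed_rep X C u (fun w k => val k) fixed_proj) => //.
- by move=> w _ a x y; apply: val_inj; exact: fl.
- by move=> v w p _ _ x; apply: val_inj; exact: fnat.
- by move=> w _ z; apply: val_inj; exact: (eqP (valP z)).
- exact: Xcc.
Qed.

End IdempotentSplitting.

(* The complement of [Y] is the image of the idempotent [1 - sigma pi], a cocontinuous
   subrepresentation; indecomposability forces it to vanish. *)
Lemma retract_of_indecomposable_iso (R : pzRingType) (V : Type) (le : V -> V -> Prop)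
    (X Y : rep R le) (pi : forall w, robj X w -> robj Y w)
    (sigma : forall w, robj Y w -> robj X w) :
  cocontinuous X -> cocontinuous Y -> indecomposable_obj X -> ~ zero_rep Y ->
  is_nat pi -> is_nat sigma -> (forall w y, pi w (sigma w y) = y) ->
  forall w x, sigma w (pi w x) = x.
Proof.
move=> Xcc Ycc [_ Xind] Ynz [pil pin] [sl sn] pis.
pose e w (x : robj X w) := x - sigma w (pi w x).
have el w : is_lin (e w).
  by move=> a x y; rewrite /e (pil w) (sl w) scalerBr opprD addrACA.
have en v w (p : le v w) x : e w (rmap X p x) = rmap X p (e v x).
  by rewrite /e (linB (rmap_lin p)) pin sn.
have pie w x : pi w (e w x) = 0 by rewrite /e (linB (pil w)) pis subrr.
have eidem w x : e w (e w x) = e w x.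
  by rewrite {1}/e pie (lin0 (sl w)) subr0.
have bip : rep_biproduct X Y (fixed_rep el en).
  exists sigma, (fun w k => val k), pi, (fixed_proj el eidem).
  split; split.
  - by split.
  - by split=> // v w p k.
  - by split.
  - by split=> [w a x y|v w p x]; apply: val_inj; [exact: el | exact: en].
  - exact: pis.
  - by move=> w k; apply: val_inj; exact: (eqP (valP k)).
  - by move=> w k /=; rewrite -(eqP (valP k)) pie.
  - by move=> w y; apply: val_inj; rewrite /= /e pis subrr.
  - by move=> w m /=; rewrite /e addrC subrK.
have [zY|zK] := Xind _ _ Ycc (fixed_rep_cocontinuous eidem Xcc) bip; first by case: Ynz.
move=> w x; have /(congr1 val) /= /eqP := zK w (fixed_proj el eidem x).
by rewrite /e subr_eq0 => /eqP <-.
Qed.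

Definition nonlimit (V : Type) (le : V -> V -> Prop) (s : V) : Prop :=
  forall D, is_chain le (fun _ => True) D -> (exists d, D d) -> is_lub le D s -> D s.

Definition strict (V : Type) (le : V -> V -> Prop) (s w : V) : Prop := le s w /\ s <> w.

Section TreeOrder.
Variables (V : Type) (le : V -> V -> Prop) (Hpo : poset_ax le).
Hypothesis tot : forall u v w, le u v -> le w v -> le u w \/ le w u.
Hypothesis dcc :
  ~ exists f : nat -> V, forall n, le (f n.+1) (f n) /\ f n.+1 <> f n.

Lemma le_or_gt_below a c s : le a c -> le s c -> le a s \/ strict le s a.
Proof.
move=> ac sc; case: (tot ac sc) => h; [by left|].
by case: (pselect (s = a)) => [->|e]; [left; apply: po_refl | right].
Qed.

Lemma dcc_minimal (P : V -> Prop) : (exists x, P x) ->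
  exists s, P s /\ forall x, P x -> le x s -> x = s.
Proof.
move=> [x0 Px0].
case: (pselect (exists s, P s /\ forall x, P x -> le x s -> x = s)) => // H.
exfalso; apply: dcc.
have step s : exists x, P s -> P x /\ le x s /\ x <> s.
  case: (pselect (P s)) => Ps; last by exists s.
  case: (pselect (exists x, P x /\ le x s /\ x <> s)) => [[x hx]|nx]; first by exists x.
  exfalso; apply: H; exists s; split=> // x Px xs.
  by case: (pselect (x = s)) => // nxs; case: nx; exists x.
have [ch hch] := choice step.
pose f n := iter n ch x0.
have Pf n : P (f n) by elim: n => [|n IH] //=; exact: (proj1 (hch _ IH)).
by exists f => n; exact: (proj2 (hch _ (Pf n))).
Qed.

(* A minimal element of ]d, w] is non-limit: everything strictly below it lies below d. *)
Lemma exists_nonlimit_between d w : le d w -> ~ le w d ->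
  exists s, nonlimit le s /\ le s w /\ ~ le s d.
Proof.
move=> dw nwd.
have [s [[sw nsd] smin]] := dcc_minimal (P := fun x => le x w /\ ~ le x d)
  (ex_intro _ w (conj (po_refl Hpo w) nwd)).
exists s; split=> //; move=> D _ _ [ub lub].
case: (pselect (D s)) => // nDs; exfalso; apply: nsd.
apply: lub => e De; case: (pselect (le e d)) => // ne.
have := smin e (conj (po_trans Hpo (ub e De) sw) ne) (ub e De).
by move=> eq; case: nDs; rewrite -eq.
Qed.

Lemma limit_witness w : ~ nonlimit le w ->
  exists D, is_chain le (fun _ => True) D /\ (exists d, D d) /\ is_lub le D w /\ ~ D w.
Proof.
move=> nn; case: (pselect (exists D, is_chain le (fun _ => True) D /\
  (exists d, D d) /\ is_lub le D w /\ ~ D w)) => // H.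
exfalso; apply: nn => D Dc De Dl; case: (pselect (D w)) => // nD.
by case: H; exists D.
Qed.

Lemma nonlimit_tail_lub w d0 : le d0 w -> ~ le w d0 ->
  let C := fun c => nonlimit le c /\ le c w /\ ~ le c d0 in
  [/\ is_chain le (fun _ => True) C, exists c, C c & is_lub le C w].
Proof.
move=> d0w nwd0 C; split.
- by split=> // a b [_ [aw _]] [_ [bw _]]; exact: tot aw bw.
- have [s [ns [sw nsd]]] := exists_nonlimit_between d0w nwd0; by exists s.
split; first by move=> c [_ [cw _]].
move=> b hb; case: (pselect (nonlimit le w)) => nlw.
  by apply: hb; split=> //; split=> //; apply: po_refl.
(* Each [d] of a chain [D] with supremum [w] lies below a non-limit point of
   ]max(d, d0), w]. *)
have [D [[_ Dch] [[e De] [[ub lub] nDw]]]] := limit_witness nlw.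
apply: lub => d Dd.
have dw := ub d Dd.
have ndw : d <> w by move=> eq; apply: nDw; rewrite -eq.
have [d' [dd' [d0d' [d'w nwd']]]] :
    exists d', le d d' /\ le d0 d' /\ le d' w /\ ~ le w d'.
  case: (tot dw d0w) => h.
    by exists d0; split=> //; split; [apply: po_refl | split].
  exists d; split; first exact: po_refl.
  by split=> //; split=> // h'; apply: ndw; exact: (po_antisym Hpo dw h').
have [s [ns [sw nsd']]] := exists_nonlimit_between d'w nwd'.
have sC : C s by split=> //; split=> // h; apply: nsd'; exact: (po_trans Hpo h d0d').
apply: (po_trans Hpo _ (hb s sC)).
by case: (tot dw sw) => // h; exfalso; apply: nsd'; exact: (po_trans Hpo h dd').
Qed.

End TreeOrder.

Lemma rmap0 (R : pzRingType) (V : Type) (le : V -> V -> Prop) (X : rep R le) u v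
    (p : le u v) : rmap X p 0 = 0.
Proof. exact: (lin0 (rmap_lin p)). Qed.

Section CutRepresentations.
Variables (R : pzRingType) (V : Type) (le : V -> V -> Prop) (Hpo : poset_ax le).
Hypothesis tot : forall u v w, le u v -> le w v -> le u w \/ le w u.
Variables (X : rep R le) (s : V).

Definition upset_obj w : lmodType R := ((le s w -> robj X w) : lmodType R).

Definition upset_map w w' (p : le w w') (a : upset_obj w) : upset_obj w' :=
  fun _ => match pselect (le s w) with left h => rmap X p (a h) | right _ => 0 end.

Lemma upset_map_lin w w' (p : le w w') : is_lin (upset_map p).
Proof.
move=> a x y; apply/funext => h' /=; rewrite /upset_map; case: pselect => h //.
  by rewrite (rmap_lin p).
by rewrite scaler0 addr0.
Qed.

Lemma upset_map_id w (p : le w w) x : upset_map p x = x.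
Proof.
apply/funext => h'; rewrite /upset_map; case: pselect => h; last by case: (h h').
by rewrite rmap_id; exact: proof_irr_app.
Qed.

Lemma upset_map_comp w1 w2 w3 (p : le w1 w2) (q : le w2 w3) (r : le w1 w3) x :
  upset_map r x = upset_map q (upset_map p x).
Proof.
apply/funext => h3; rewrite /upset_map; case: (pselect (le s w1)) => h1.
  case: pselect => h2; first by rewrite (rmap_comp p q r).
  by case: h2; exact: (po_trans Hpo h1 p).
by case: pselect => // h2; rewrite rmap0.
Qed.

Definition upset_rep : rep R le := Rep upset_map_lin upset_map_id upset_map_comp.

(* [cut_rep w = X(s)^Hom(w,s) (+) X(w)^[s < w]]: below [s] it is [e_star s (X s)], strictly
   above [s] it is [X]; at [w > s] the first summand is zero and the second receives the
   structure maps from both. *)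
Definition cut_obj w : lmodType R :=
  (((le w s -> robj X s) * (strict le s w -> robj X w))%type : lmodType R).

Definition cut_map w w' (p : le w w') (y : cut_obj w) : cut_obj w' :=
  (fun q' => y.1 (po_trans Hpo p q'),
   fun h' => match pselect (strict le s w) with
             | left h => rmap X p (y.2 h)
             | right _ => match pselect (le w s) with
                          | left q => rmap X (proj1 h') (y.1 q)
                          | right _ => 0 end end).

Lemma cut_map_lin w w' (p : le w w') : is_lin (cut_map p).
Proof.
move=> a x y; rewrite /cut_map /=; congr (_, _); apply/funext => h' /=.
case: pselect => h; first by rewrite (rmap_lin p).
case: pselect => q; first by rewrite (rmap_lin (proj1 h')).
by rewrite scaler0 addr0.
Qed.

Lemma cut_map_id w (p : le w w) x : cut_map p x = x.
Proof.
case: x => y z; rewrite /cut_map /=; congr (_, _); apply/funext => h' /=.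
  exact: proof_irr_app.
case: pselect => h; last by case: (h h').
by rewrite rmap_id; exact: proof_irr_app.
Qed.

Lemma cut_map_comp w1 w2 w3 (p : le w1 w2) (q : le w2 w3) (r : le w1 w3) x :
  cut_map r x = cut_map q (cut_map p x).
Proof.
case: x => y z; rewrite /cut_map /=; congr (_, _); apply/funext => h3 /=.
  exact: proof_irr_app.
case: (pselect (strict le s w1)) => h1.
  case: pselect => h2; first by rewrite (rmap_comp p q r).
  case: h2; split; first exact: (po_trans Hpo (proj1 h1) p).
  move=> e; subst w2; apply: (proj2 h1); exact: (po_antisym Hpo (proj1 h1) p).
case: (pselect (le w1 s)) => q1.
  case: pselect => h2; first by rewrite -(rmap_comp (proj1 h2) q (proj1 h3)).
  case: pselect => q2; first by congr (rmap X _ _); exact: proof_irr_app.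
  by case: (le_or_gt_below Hpo tot q (proj1 h3)).
by case: (le_or_gt_below Hpo tot r (proj1 h3)).
Qed.

Definition cut_rep : rep R le := Rep cut_map_lin cut_map_id cut_map_comp.

Lemma cut_obj_ext w (y y' : cut_obj w) : y.1 = y'.1 -> y.2 = y'.2 -> y = y'.
Proof. by case: y => a b; case: y' => a' b' /= -> ->. Qed.

Lemma cut_obj_trivial w : ~ le w s -> ~ strict le s w -> trivial_mod (cut_obj w).
Proof. by move=> n1 n2 [y z]; rewrite (fun_absurd_eq0 y n1) (fun_absurd_eq0 z n2). Qed.

End CutRepresentations.

Section CutCocontinuity.
Variables (R : pzRingType) (V : Type) (le : V -> V -> Prop) (Hpo : poset_ax le).
Hypothesis tot : forall u v w, le u v -> le w v -> le u w \/ le w u.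
Variables (X : rep R le) (s : V).
Hypothesis Xcc : cocontinuous X.
Variables (C : V -> Prop) (u : V).
Hypotheses (Cch : is_chain le (fun _ => True) C) (Cne : exists c, C c) (Cl : is_lub le C u).

Lemma cut_colim_below : le u s -> is_colim_cocone (cut_rep Hpo tot X s) C u.
Proof.
move=> us.
have Dle w : C w \/ w = u -> le w s.
  by case=> [Cw|->] //; exact: (po_trans Hpo (proj1 Cl w Cw) us).
have nlt w : C w \/ w = u -> ~ strict le s w.
  by move=> Dw [sw nsw]; apply: nsw; exact: (po_antisym Hpo sw (Dle w Dw)).
refine (@colim_retract _ _ _ (cut_rep Hpo tot X s) (e_star Hpo s (robj X s)) C u
  (fun w (y : cut_obj X s w) => y.1)
  (fun w (e : le w s -> robj X s) => (e, 0 : strict le s w -> robj X w) : cut_obj X s w)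
  _ _ _ _ _ _).
- by move=> w _ a x y.
- move=> w _ a x y /=; congr (_, _).
  by rewrite -[RHS]/(a *: (0 : strict le s w -> robj X w) + 0) scaler0 addr0.
- by move=> v w p _ _ z.
- move=> v w p Dv Dw x /=; congr (_, _); apply/funext => h'.
  by case: (nlt w Dw h').
- move=> w Dw [y z] /=; congr (_, _); apply/esym/fun_absurd_eq0; exact: nlt.
- exact: e_star_cocontinuous.
Qed.

Lemma cut_colim_above : le s u -> ~ le u s -> is_colim_cocone (cut_rep Hpo tot X s) C u.
Proof.
move=> su us; have [c1 [Cc1 nc1]] := lub_not_le Cl us.
have ltc1 : strict le s c1 by case: (le_or_gt_below Hpo tot (proj1 Cl c1 Cc1) su).
apply: (colim_of_tail Hpo Cch (proj1 Cl) Cc1).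
have Dlt w : (C w /\ le c1 w) \/ w = u -> strict le s w.
  case=> [[Cw c1w]|->].
  + split; first exact: (po_trans Hpo (proj1 ltc1) c1w).
    by move=> e; subst w; apply: nc1.
  + by split=> // e; subst u; apply: us; apply: po_refl.
refine (@colim_retract _ _ _ (cut_rep Hpo tot X s) X _ u
  (fun w (y : cut_obj X s w) =>
     match pselect (strict le s w) with left h => y.2 h | right _ => 0 end)
  (fun w (x : robj X w) => (0 : le w s -> robj X s, fun _ => x) : cut_obj X s w)
  _ _ _ _ _ _).
- by move=> w _ a x y /=; case: pselect => // _; rewrite scaler0 addr0.
- move=> w _ a x y /=; congr (_, _).
  by rewrite -[RHS]/(a *: (0 : le w s -> robj X s) + 0) scaler0 addr0.
- move=> v w p Dv Dw [y z] /=; case: pselect => hw; last by case: (hw (Dlt w Dw)).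
  case: pselect => hv; last by case: (hv (Dlt v Dv)).
  by congr (rmap X _ _); exact: proof_irr_app.
- move=> v w p Dv Dw x /=; congr (_, _); apply/funext => h' /=.
  by case: pselect => hv; last by case: (hv (Dlt v Dv)).
- move=> w Dw [y z] /=; congr (_, _).
  + apply/esym/fun_absurd_eq0 => q; apply: (proj2 (Dlt w Dw)).
    exact: (po_antisym Hpo (proj1 (Dlt w Dw)) q).
  + apply/funext => h' /=; case: pselect => h; last by case: (h h').
    exact: proof_irr_app.
- exact: colim_tail.
Qed.

Lemma cut_colim_apart : ~ le s u -> ~ le u s -> is_colim_cocone (cut_rep Hpo tot X s) C u.
Proof.
move=> su us; apply: colim_trivial.
  by apply: cut_obj_trivial => // h; apply: su; exact: proj1 h.
move=> c Cc; have [c1 [Cc1 nc1]] := lub_not_le Cl us.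
have triv c' : C c' -> le c1 c' -> trivial_mod (cut_obj X s c').
  move=> Cc' c1c'; apply: cut_obj_trivial.
  + by move=> h; apply: nc1; exact: (po_trans Hpo c1c' h).
  + by move=> h; apply: su; exact: (po_trans Hpo (proj1 h) (proj1 Cl c' Cc')).
case: (proj2 Cch c c1 Cc Cc1) => q.
+ by exists c1; split=> //; exists q; apply: triv => //; apply: po_refl.
+ by exists c; split=> //; exists (po_refl Hpo c); apply: triv.
Qed.

(* Because [s] is non-limit, a chain whose supremum lies above [s] eventually lies above [s]. *)
Lemma upset_colim_above : nonlimit le s -> le s u -> is_colim_cocone (upset_rep Hpo X s) C u.
Proof.
move=> nls su.
have [c1 [Cc1 sc1]] : exists c1, C c1 /\ le s c1.
  case: (pselect (exists c1, C c1 /\ le s c1)) => [//|H]; exfalso.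
  have allle c : C c -> le c s.
    by move=> Cc; case: (tot (proj1 Cl c Cc) su) => // h; case: H; exists c.
  have us : u = s by apply: (po_antisym Hpo (proj2 Cl s allle) su).
  by subst u; case: H; exists s; split; [exact: nls | exact: po_refl].
apply: (colim_of_tail Hpo Cch (proj1 Cl) Cc1).
have Dle w : (C w /\ le c1 w) \/ w = u -> le s w.
  by case=> [[Cw c1w]|->] //; exact: (po_trans Hpo sc1 c1w).
refine (@colim_retract _ _ _ (upset_rep Hpo X s) X _ u
  (fun w (a : upset_obj X s w) =>
     match pselect (le s w) with left h => a h | right _ => 0 end)
  (fun w (x : robj X w) => (fun _ => x) : upset_obj X s w) _ _ _ _ _ _).
- by move=> w _ a x y /=; case: pselect => // _; rewrite scaler0 addr0.
- by move=> w _ a x y.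
- move=> v w p Dv Dw a /=; rewrite /upset_map.
  case: pselect => hw; last by case: (hw (Dle w Dw)).
  by case: pselect => hv; last by case: (hv (Dle v Dv)).
- move=> v w p Dv Dw x /=; apply/funext => h' /=; rewrite /upset_map.
  by case: pselect => hv; last by case: (hv (Dle v Dv)).
- move=> w Dw a /=; apply/funext => h' /=; case: pselect => h; last by case: (h h').
  exact: proof_irr_app.
- exact: colim_tail.
Qed.

Lemma upset_colim_apart : ~ le s u -> is_colim_cocone (upset_rep Hpo X s) C u.
Proof.
move=> su; apply: colim_trivial; first exact: trivial_mod_absurd.
move=> c Cc; exists c; split=> //; exists (po_refl Hpo c); apply: trivial_mod_absurd => h.
by apply: su; exact: (po_trans Hpo h (proj1 Cl c Cc)).
Qed.

End CutCocontinuity.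

Lemma cut_rep_cocontinuous (R : pzRingType) (V : Type) (le : V -> V -> Prop)
    (Hpo : poset_ax le) (tot : forall u v w, le u v -> le w v -> le u w \/ le w u)
    (X : rep R le) (s : V) :
  cocontinuous X -> cocontinuous (cut_rep Hpo tot X s).
Proof.
move=> Xcc C u Cch Cne Cl.
case: (pselect (le u s)) => us; first exact: cut_colim_below.
case: (pselect (le s u)) => su; first exact: cut_colim_above.
exact: cut_colim_apart.
Qed.

Lemma upset_rep_cocontinuous (R : pzRingType) (V : Type) (le : V -> V -> Prop)
    (Hpo : poset_ax le) (tot : forall u v w, le u v -> le w v -> le u w \/ le w u)
    (X : rep R le) (s : V) :
  cocontinuous X -> nonlimit le s -> cocontinuous (upset_rep Hpo X s).
Proof.
move=> Xcc nls C u Cch Cne Cl.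
case: (pselect (le s u)) => su; first exact: (upset_colim_above tot).
exact: upset_colim_apart.
Qed.

Section SplittingAtNonlimit.
Variables (R : pzRingType) (V : Type) (le : V -> V -> Prop) (Hpo : poset_ax le).
Hypothesis tot : forall u v w, le u v -> le w v -> le u w \/ le w u.
Variables (X : rep R le) (s : V).
Hypotheses (Xcc : cocontinuous X) (Xinj : injective_obj X) (Xind : indecomposable_obj X).
Hypothesis nls : nonlimit le s.

Let Y := cut_rep Hpo tot X s.
Let U := upset_rep Hpo X s.

Definition cut_proj w (x : robj X w) : cut_obj X s w :=
  (fun q : le w s => rmap X q x, fun _ : strict le s w => x).

Lemma cut_proj_nat : is_nat (X := X) (Y := Y) cut_proj.
Proof.
split.
- move=> w a x y; apply: cut_obj_ext => /=; apply/funext => q /=; last by [].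
  exact: (rmap_lin q).
- move=> v w p x; apply: cut_obj_ext => /=; apply/funext => h' /=.
    exact/esym/rmap_comp.
  case: pselect => h //.
  case: pselect => q; first exact: rmap_comp.
  by case: (le_or_gt_below Hpo tot p (proj1 h')).
Qed.

Definition upset_to_cut w (a : upset_obj X s w) : cut_obj X s w :=
  (fun q => match pselect (le s w) with left h => rmap X q (a h) | right _ => 0 end,
   fun h' => a (proj1 h')).

Definition upset_incl w (a : upset_obj X s w) : robj X w :=
  match pselect (le s w) with left h => a h | right _ => 0 end.

Lemma upset_to_cut_nat : is_nat (X := U) (Y := Y) upset_to_cut.
Proof.
split.
- move=> w a x y; apply: cut_obj_ext => //=; apply/funext => q /=.
  case: pselect => h; first exact: (rmap_lin q).
  by rewrite scaler0 addr0.
- move=> v w p a; apply: cut_obj_ext => /=; apply/funext => q' /=.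
    rewrite /upset_map; case: (pselect (le s v)) => hv.
      case: pselect => hw; first by rewrite -(rmap_comp p q' (po_trans Hpo p q')).
      by case: hw; exact: (po_trans Hpo hv p).
    by case: pselect => hw //; rewrite rmap0.
  rewrite /upset_map; case: (pselect (le s v)) => hv.
    case: pselect => h; first by congr (rmap X _ _); exact: proof_irr_app.
    case: pselect => q; first by rewrite -(rmap_comp q (proj1 q') p).
    case: (pselect (s = v)) => e; first by case: q; rewrite -e; apply: po_refl.
    by case: h.
  case: pselect => lv; first by case: hv; exact: proj1 lv.
  by case: pselect => q //; rewrite rmap0.
Qed.

Lemma upset_incl_nat : is_nat (X := U) (Y := X) upset_incl.
Proof.
split.
- by move=> w a x y; rewrite /upset_incl; case: pselect => h //; rewrite scaler0 addr0.
- move=> v w p a; rewrite /upset_incl /= /upset_map.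
  case: (pselect (le s v)) => hv.
    by case: pselect => hw //; case: hw; exact: (po_trans Hpo hv p).
  by rewrite rmap0; case: pselect.
Qed.

Lemma upset_to_cut_inj w : injective (@upset_to_cut w).
Proof.
move=> a a' e; apply/funext => h.
case: (pselect (s = w)) => esw.
  subst w; have := congr1 (fun F => F.1 (po_refl Hpo s)) e; rewrite /upset_to_cut /=.
  case: pselect => h0; last by case: (h0 h).
  by rewrite !rmap_id (Prop_irrelevance h h0).
have := congr1 (fun F => F.2 (conj h esw)) e; rewrite /upset_to_cut /= => e'.
by rewrite (proof_irr_app a h (proj1 (conj h esw))) (proof_irr_app a' h (proj1 (conj h esw))).
Qed.

Lemma cut_proj_section (sigma : forall w, cut_obj X s w -> robj X w) :
  is_nat (X := Y) (Y := X) sigma -> (forall w a, sigma w (upset_to_cut a) = upset_incl a) ->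
  forall w y, cut_proj (sigma w y) = y.
Proof.
move=> sn sj w y; case: (pselect (strict le s w)) => h.
  have ns : ~ le w s by move=> q; apply: (proj2 h); exact: (po_antisym Hpo (proj1 h) q).
  pose a : upset_obj X s w := fun hs => y.2 (conj hs (proj2 h)).
  have ya : y = upset_to_cut a.
    apply: cut_obj_ext; first by rewrite (fun_absurd_eq0 y.1 ns) (fun_absurd_eq0 _.1 ns).
    by apply/funext => h' /=; exact: proof_irr_app.
  rewrite ya sj /upset_incl; case: pselect => hs; last by case: hs; exact: proj1 h.
  apply: cut_obj_ext.
    by rewrite (fun_absurd_eq0 (cut_proj (a hs)).1 ns) (fun_absurd_eq0 (upset_to_cut a).1 ns).
  by apply/funext => h' /=; exact: proof_irr_app.
case: (pselect (le w s)) => q; last by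
  rewrite (cut_obj_trivial q h (cut_proj _)) (cut_obj_trivial q h y).
apply: cut_obj_ext => /=; last by rewrite (fun_absurd_eq0 y.2 h); apply: fun_absurd_eq0.
apply/funext => q' /=; rewrite -(proj2 sn w s q' y).
have -> : rmap Y q' y = upset_to_cut (fun _ : le s s => y.1 q').
  apply: cut_obj_ext => /=; apply/funext; last by move=> h'; case: (proj2 h').
  move=> q'' /=.
  case: pselect => h0; last by case: h0; apply: po_refl.
  by rewrite rmap_id; exact: proof_irr_app.
by rewrite sj /upset_incl; case: pselect => // h0; case: h0; apply: po_refl.
Qed.

(* Injectivity of [X] extends [upset_incl] along the mono [upset_to_cut] to a section of
   [cut_proj]; since [X] is indecomposable and the cut representation is nonzero, that
   section is an inverse. *)
Lemma cut_proj_iso : ~ trivial_mod (robj X s) ->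
  exists sigma : forall w, cut_obj X s w -> robj X w,
    [/\ is_nat (X := Y) (Y := X) sigma, forall w y, cut_proj (sigma w y) = y
       & forall w x, sigma w (cut_proj x) = x].
Proof.
move=> nXs.
have umono : rep_mono (A := U) (B := Y) upset_to_cut.
  by apply: rep_mono_of_inj; exact: upset_to_cut_inj.
have [sigma [sn sj]] : exists sigma : forall w, cut_obj X s w -> robj X w,
    is_nat (X := Y) (Y := X) sigma /\ forall w a, sigma w (upset_to_cut a) = upset_incl a.
  apply: (Xinj (A := U) (B := Y)) => //.
  - exact: upset_rep_cocontinuous.
  - exact: cut_rep_cocontinuous.
  - exact: upset_to_cut_nat.
  - exact: upset_incl_nat.
have pis := cut_proj_section sn sj.
exists sigma; split=> //.
apply: (@retract_of_indecomposable_iso _ _ _ X Y cut_proj sigma Xcc) => //.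
- exact: cut_rep_cocontinuous.
- move=> zY; apply: nXs => x.
  by have /(congr1 (fun F => F.1 (po_refl Hpo s))) := zY s ((fun _ => x, 0) : cut_obj X s s).
exact: cut_proj_nat.
Qed.

Lemma trivial_off_nonlimit_support w : ~ trivial_mod (robj X s) ->
  ~ le w s -> ~ strict le s w -> trivial_mod (robj X w).
Proof.
move=> nXs n1 n2 x; have [sigma [[sl _] _ hid]] := cut_proj_iso nXs.
by rewrite -(hid w x) (cut_obj_trivial n1 n2 (cut_proj x)) (lin0 (sl w)).
Qed.

Lemma rmap_to_nonlimit_support_bij w (q : le w s) : ~ trivial_mod (robj X s) ->
  injective (rmap X q) /\ forall x', exists x, rmap X q x = x'.
Proof.
move=> nXs; have [sigma [sn pis hid]] := cut_proj_iso nXs; split.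
  apply: (lin_inj_of_ker (rmap_lin q)) => x e; rewrite -(hid w x).
  have -> : cut_proj x = 0.
    apply: cut_obj_ext => /=.
      by apply/funext => q' /=; rewrite (proof_irr_app (fun q => rmap X q x) q' q) e.
    apply: fun_absurd_eq0 => h; apply: (proj2 h); exact: (po_antisym Hpo (proj1 h) q).
  exact: (lin0 (proj1 sn w)).
move=> x'; exists (sigma w ((fun _ => x', 0) : cut_obj X s w)).
exact: (congr1 (fun F => F.1 q) (pis w ((fun _ => x', 0) : cut_obj X s w))).
Qed.

End SplittingAtNonlimit.

Section NonlimitSupport.
Variables (R : pzRingType) (V : Type) (le : V -> V -> Prop) (Hpo : poset_ax le).
Hypothesis tot : forall u v w, le u v -> le w v -> le u w \/ le w u.
Hypothesis dcc :
  ~ exists f : nat -> V, forall n, le (f n.+1) (f n) /\ f n.+1 <> f n.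
Variable X : rep R le.
Hypotheses (Xcc : cocontinuous X) (Xinj : injective_obj X) (Xind : indecomposable_obj X).

Definition nonlimit_support (c : V) : Prop := nonlimit le c /\ ~ trivial_mod (robj X c).

Lemma trivial_of_nonlimit_tail w d0 : le d0 w -> ~ le w d0 ->
  (forall c, nonlimit le c -> le c w -> ~ le c d0 -> trivial_mod (robj X c)) ->
  trivial_mod (robj X w).
Proof.
move=> d0w nwd0 H; have [Cch Cne Cl] := nonlimit_tail_lub Hpo tot dcc d0w nwd0.
by apply: (trivial_of_colim (Xcc Cch Cne Cl)) => c [nc [cw ncd0]]; exact: H.
Qed.

Lemma nonlimit_support_chain : is_chain le (fun _ => True) nonlimit_support.
Proof.
split=> // a b [nla nXa] [nlb nXb]; case: (pselect (le b a)) => hba; first by right.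
case: (pselect (strict le a b)) => hab; first by left; exact: proj1 hab.
by case: nXb; exact: (trivial_off_nonlimit_support Hpo tot Xcc Xinj Xind nla nXa hba hab).
Qed.

Section AtSupremum.
Variable u : V.
Hypothesis Hu : is_lub le nonlimit_support u.

(* The structure maps along the support above [s0] are bijective, so their inverses form a
   cocone into [X s0] through which [X s0 -> X u] factors. *)
Lemma rmap_from_support_inj s0 (p : le s0 u) :
  nonlimit_support s0 -> injective (rmap X p).
Proof.
move=> Ss0; apply: (lin_inj_of_ker (rmap_lin p)) => x e.
pose C s := nonlimit_support s /\ le s0 s.
have Cch : is_chain le (fun _ => True) C := chain_tail s0 nonlimit_support_chain.
have Cl : is_lub le C u := lub_tail Hpo nonlimit_support_chain Ss0 Hu.
have bij s (Cs : C s) := rmap_to_nonlimit_support_bij Hpo tot Xcc Xinj Xind (proj1 (proj1 Cs))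
  (proj2 Cs) (proj2 (proj1 Cs)).
pose g s (Cs : C s) (y : robj X s) : robj X s0 := proj1_sig (cid (proj2 (bij s Cs) y)).
have gP s (Cs : C s) y : rmap X (proj2 Cs) (g s Cs y) = y by rewrite /g; case: cid.
have gl s (Cs : C s) : is_lin (g s Cs).
  by move=> a y y'; apply: (proj1 (bij s Cs)); rewrite (rmap_lin (proj2 Cs)) !gP.
have gc v w (Cv : C v) (Cw : C w) (q : le v w) y : g w Cw (rmap X q y) = g v Cv y.
  by apply: (proj1 (bij w Cw)); rewrite gP (rmap_comp (proj2 Cv) q (proj2 Cw)) gP.
have Cs0 : C s0 by split=> //; apply: po_refl.
have [h [hl hc _]] := Xcc Cch (ex_intro _ s0 Cs0) Cl gl gc.
have g0 : g s0 Cs0 x = x by apply: (proj1 (bij s0 Cs0)); rewrite gP rmap_id.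
by rewrite -g0 -(hc s0 Cs0 p x) e (lin0 hl).
Qed.

Lemma rmap_to_sup_inj w (q : le w u) : injective (rmap X q).
Proof.
case: (pselect (exists s0, nonlimit_support s0 /\ le w s0)) => [[s0 [Ss0 ws0]]|H].
  move=> x y e; have s0u := proj1 Hu s0 Ss0.
  apply: (proj1 (rmap_to_nonlimit_support_bij Hpo tot Xcc Xinj Xind (proj1 Ss0) ws0 (proj2 Ss0))).
  by apply: (rmap_from_support_inj (p := s0u) Ss0); rewrite -!(rmap_comp ws0 s0u q).
have uw : le u w.
  apply: (proj2 Hu) => s Ss; case: (tot (proj1 Hu s Ss) q) => // h.
  by case: H; exists s.
have ewu : w = u := po_antisym Hpo q uw.
by subst w => x y; rewrite !rmap_id.
Qed.

Lemma trivial_off_sup w : ~ le w u -> trivial_mod (robj X w).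
Proof.
move=> nwu; case: (pselect (nonlimit le w)) => nlw.
  move=> y; case: (pselect (trivial_mod (robj X w))) => [t|nt]; first exact: t.
  by case: nwu; exact: (proj1 Hu w (conj nlw nt)).
have [D [_ [_ [[ub lub] nDw]]]] := limit_witness nlw.
have [d0 [Dd0 nd0u]] := lub_not_le (conj ub lub) nwu.
have nwd0 : ~ le w d0 by move=> h; apply: nDw; rewrite -(po_antisym Hpo (ub d0 Dd0) h).
apply: (trivial_of_nonlimit_tail (ub d0 Dd0) nwd0) => c nc cw ncd0.
case: (pselect (trivial_mod (robj X c))) => // ntc; exfalso.
have cu := proj1 Hu c (conj nc ntc).
by case: (tot cw (ub d0 Dd0)) => // h; apply: nd0u; exact: (po_trans Hpo h cu).
Qed.

Lemma e_star_unit_sup_inj w : injective (e_star_unit (u := u) (X := X) (w := w)).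
Proof.
move=> x y e; case: (pselect (le w u)) => q.
  by apply: (rmap_to_sup_inj (q := q)); exact: (congr1 (@^~ q) e).
by rewrite (trivial_off_sup q x) (trivial_off_sup q y).
Qed.

End AtSupremum.
End NonlimitSupport.

Theorem theorem4p2 (R : pzRingType) (V : Type) (le : V -> V -> Prop)
    (Hpo : poset_ax le) (T : V -> Prop) (HT : is_completion le T)
    (X : rep R le) (Xcc : cocontinuous X) (Xinj : injective_obj X)
    (Xind : indecomposable_obj X) :
  exists (v : V) (E : lmodType R),
    [/\ injective_module E, indecomposable_module E & rep_iso X (e_star Hpo v E)].
Proof.
have [[_ _ tree complete] _] := HT.
have tot u v w : le u v -> le w v -> le u w \/ le w u := tree_down_total tree I I I.
have dcc : ~ exists f : nat -> V, forall n, le (f n.+1) (f n) /\ f n.+1 <> f n.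
  by move=> [f hf]; apply: (tree_dcc tree); exists f.
have [u Hu] := complete _ (nonlimit_support_chain Hpo tot Xcc Xinj Xind).
have iso : rep_iso X (e_star Hpo u (robj X u)).
  apply: rep_iso_e_star_unit => // w.
  exact: (e_star_unit_sup_inj Hpo tot dcc Xcc Xinj Xind Hu).
exists u, (robj X u); split=> //.
- exact: injective_module_of_e_star (injective_obj_iso Xinj iso).
- exact: indecomposable_module_of_e_star (indecomposable_obj_iso Xind iso).
Qed.
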